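(* Let $\Gamma$ be a finitely generated infinite group, $\{\Gamma_n\}$ a sequence of finite-index normal subgroups with $\bigcap_n\bigcup_{i\ge n}\Gamma_i=\{e\}$, $\pi_n:\Gamma\to\Gamma/\Gamma_n$ the quotient maps, and $S\subset\Gamma\setminus\{e\}$ a finite symmetric generating set. For every finite $A\subset\Gamma$ there is a finite $B\subset\Gamma$ with $A\subset B$ such that for all sufficiently large $n$, the set $(\Gamma/\Gamma_n)\setminus\pi_n(B)$ is connected in the Cayley graph $C(\Gamma/\Gamma_n,\pi_n(S))$.
   Context: $C(\Gamma/\Gamma_n,\pi_n(S))$ has vertex set $\Gamma/\Gamma_n$ and edges $\{g\Gamma_n,gs\Gamma_n\}$ for $g\in\Gamma,s\in S$. A vertex subset is connected if its induced subgraph (all edges with both endpoints in the set) is connected. *)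

From Stdlib Require Import List Relations Arith.
Import ListNotations.

Section Groups.
Context {G : Type} (mul : G -> G -> G) (inv : G -> G) (e : G).

Definition is_group : Prop :=
  (forall x y z, mul x (mul y z) = mul (mul x y) z) /\
  (forall x, mul e x = x) /\ (forall x, mul x e = x) /\
  (forall x, mul (inv x) x = e) /\ (forall x, mul x (inv x) = e).

Definition infinite_carrier : Prop := ~ exists l : list G, forall g, In g l.

Definition normal_subgroup (H : G -> Prop) : Prop :=
  H e /\ (forall x y, H x -> H y -> H (mul x y)) /\ (forall x, H x -> H (inv x)) /\
  (forall x g, H x -> H (mul (inv g) (mul x g))).

Definition finite_index (H : G -> Prop) : Prop :=
  exists reps : list G, forall g, exists r, In r reps /\ H (mul (inv r) g).

Definition word_prod (w : list G) : G := fold_right mul e w.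

Definition sym_gen_set (S : list G) : Prop :=
  (forall s, In s S -> s <> e) /\
  (forall s, In s S -> In (inv s) S) /\
  (forall g, exists w : list G, (forall s, In s w -> In s S) /\ word_prod w = g).

Definition same_coset (H : G -> Prop) (g h : G) : Prop := H (mul (inv g) h).

Definition outside_image (H : G -> Prop) (B : list G) (g : G) : Prop :=
  forall b, In b B -> ~ same_coset H g b.

(* One step in the Cayley graph C(G/H, pi(S)) restricted to vertices satisfying P,
   working on representatives: either the same vertex (same coset), or
   hH = g s H for some s in S (an edge {gH, gsH}). *)
Definition quot_step (H : G -> Prop) (S : list G) (P : G -> Prop) (g h : G) : Prop :=
  P g /\ P h /\
  (same_coset H g h \/ exists s, In s S /\ same_coset H (mul g s) h).

(* The vertex set {gH | P g} (P invariant under cosets) induces a connected subgraph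
   of C(G/H, pi(S)). *)
Definition quot_connected (H : G -> Prop) (S : list G) (P : G -> Prop) : Prop :=
  forall g h, P g -> P h -> clos_refl_trans G (quot_step H S P) g h.

End Groups.

(* Take for B the "filling" of a ball containing A: the ball together with
   all finite components of its complement in the Cayley graph C(G, S). Then B is
   connected, contains e, and every vertex outside B lies in an infinite component of
   G \ B. Only finitely many elements of G ("critical" elements, built from B, B^-1 and
   S) matter, and for large n the subgroup Gam_n avoids all nontrivial ones. For such n:
   (1) pi(B) is connected; (2) every vertex outside pi(B) can be joined, outside
   pi(B), to a vertex v with pi(vB) disjoint from pi(B) -- escape along an infinite
   component of G \ B until leaving the finite set B B^-1; (3) G/H is connected.
   An abstract criterion in the finite quotient turns (1)-(3) into connectivity of
   the complement of pi(B): a disconnection would produce, via translates of B, an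
   infinite strictly decreasing sequence of components of G/H. *)

From Stdlib Require Import List Relations Arith Lia Classical ClassicalEpsilon.
Import ListNotations.

Section Paths.
Context {X : Type}.

Definition restrict (R : relation X) (P : X -> Prop) (a b : X) : Prop :=
  P a /\ P b /\ R a b.

Lemma rt_mono (R1 R2 : relation X) :
  (forall a b, R1 a b -> R2 a b) ->
  forall a b, clos_refl_trans X R1 a b -> clos_refl_trans X R2 a b.
Proof.
  intros HR a b H; induction H; eauto using rt_step, rt_refl, rt_trans.
Qed.

Lemma rt_symmetric (R : relation X) :
  (forall a b, R a b -> R b a) ->
  forall a b, clos_refl_trans X R a b -> clos_refl_trans X R b a.
Proof.
  intros HR a b H; induction H; eauto using rt_step, rt_refl, rt_trans.
Qed.

Lemma restrict_weaken (R : relation X) (P P' : X -> Prop) a b :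
  (forall w, P w -> P' w) ->
  clos_refl_trans X (restrict R P) a b -> clos_refl_trans X (restrict R P') a b.
Proof. intros HP; apply rt_mono; intros x y (?&?&?); repeat split; auto. Qed.

Lemma restrict_end (R : relation X) (P : X -> Prop) a b :
  clos_refl_trans X (restrict R P) a b -> P a -> P b.
Proof. intros H; induction H as [x y (_&?&_)| |]; auto. Qed.

Lemma path_exit (R : relation X) (P : X -> Prop) a b :
  clos_refl_trans X R a b -> P a -> ~ P b ->
  exists p q, clos_refl_trans X (restrict R P) a p /\ R p q /\ P p /\ ~ P q.
Proof.
  intros H; apply clos_rt_rt1n in H; induction H as [|x y z Rxy _ IH]; intros Pa Pb.
  - contradiction.
  - destruct (classic (P y)) as [Py|Py].
    + destruct (IH Py Pb) as (p&q&Hyp&Rpq&Pp&Pq).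
      exists p, q; repeat split; auto.
      apply rt_trans with y; [apply rt_step; repeat split|]; auto.
    + exists x, y; repeat split; auto using rt_refl.
Qed.

Lemma restrict_change (R : relation X) (P P' : X -> Prop) a b :
  clos_refl_trans X (restrict R P) a b ->
  (forall w, clos_refl_trans X (restrict R P) a w -> P' w) ->
  clos_refl_trans X (restrict R P') a b.
Proof.
  intros H; apply clos_rt_rtn1 in H.
  induction H as [|y z (Py&Pz&Ryz) Hay IH]; intros Hw.
  - apply rt_refl.
  - apply clos_rtn1_rt in Hay.
    apply rt_trans with y; [apply IH; auto|].
    apply rt_step; repeat split; auto; apply Hw; auto.
    apply rt_trans with y; [|apply rt_step; repeat split]; auto.
Qed.

Definition count_sat (P : X -> Prop) (l : list X) : nat :=
  length (filter (fun a => if excluded_middle_informative (P a) then true else false) l).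

Lemma count_sat_le (P Q : X -> Prop) (l : list X) :
  (forall a, In a l -> P a -> Q a) -> count_sat P l <= count_sat Q l.
Proof.
  unfold count_sat; induction l as [|x l IH]; intros HPQ; simpl; [lia|].
  specialize (IH (fun a h => HPQ a (or_intror h))).
  destruct (excluded_middle_informative (P x)) as [Px|Px];
  destruct (excluded_middle_informative (Q x)) as [Qx|Qx]; simpl; try lia.
  exfalso; auto with datatypes.
Qed.

Lemma count_sat_lt (P Q : X -> Prop) (l : list X) :
  (forall a, In a l -> P a -> Q a) -> (exists a, In a l /\ Q a /\ ~ P a) ->
  count_sat P l < count_sat Q l.
Proof.
  unfold count_sat; induction l as [|x l IH]; intros HPQ (a&Ha&Qa&Pa); [destruct Ha|].
  simpl; destruct Ha as [Ha|Ha].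
  - subst x. assert (Hle := count_sat_le P Q l (fun b h => HPQ b (or_intror h))).
    unfold count_sat in Hle.
    destruct (excluded_middle_informative (P a)); [contradiction|].
    destruct (excluded_middle_informative (Q a)); [simpl; lia|contradiction].
  - specialize (IH (fun b h => HPQ b (or_intror h)) (ex_intro _ a (conj Ha (conj Qa Pa)))).
    destruct (excluded_middle_informative (P x)) as [Px|Px];
    destruct (excluded_middle_informative (Q x)) as [Qx|Qx]; simpl; try lia.
    exfalso; auto with datatypes.
Qed.

End Paths.

Section Group.
Context {G : Type} (mul : G -> G -> G) (inv : G -> G) (e : G)
  (Hgrp : is_group mul inv e).
Local Notation "x ** y" := (mul x y) (at level 40, left associativity).

Lemma mul_assoc x y z : x ** (y ** z) = x ** y ** z. Proof. apply Hgrp. Qed.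
Lemma mul_e_l x : e ** x = x. Proof. apply Hgrp. Qed.
Lemma mul_e_r x : x ** e = x. Proof. apply Hgrp. Qed.
Lemma mul_inv_l x : inv x ** x = e. Proof. apply Hgrp. Qed.
Lemma mul_inv_r x : x ** inv x = e. Proof. apply Hgrp. Qed.
Lemma mul_KV a b : inv a ** (a ** b) = b.
Proof. rewrite mul_assoc, mul_inv_l, mul_e_l; auto. Qed.
Lemma mul_VK a b : a ** (inv a ** b) = b.
Proof. rewrite mul_assoc, mul_inv_r, mul_e_l; auto. Qed.
Lemma inv_mul a b : inv (a ** b) = inv b ** inv a.
Proof.
  transitivity (inv (a ** b) ** ((a ** b) ** (inv b ** inv a))).
  - rewrite <- (mul_assoc a b), mul_VK, mul_inv_r, mul_e_r; reflexivity.
  - rewrite mul_KV; reflexivity.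
Qed.
Lemma inv_inv a : inv (inv a) = a.
Proof.
  transitivity (inv (inv a) ** (inv a ** a));
    [rewrite mul_inv_l, mul_e_r | rewrite mul_KV]; reflexivity.
Qed.
Lemma inv_e : inv e = e.
Proof. rewrite <- (mul_e_l (inv e)); apply mul_inv_r. Qed.
Lemma eq_of_div_e a b : inv a ** b = e -> a = b.
Proof. intro H; rewrite <- (mul_VK a b), H, mul_e_r; reflexivity. Qed.

Ltac gsimpl := repeat (first [rewrite inv_mul | rewrite inv_inv | rewrite inv_e
  | rewrite <- mul_assoc | rewrite mul_KV | rewrite mul_VK | rewrite mul_inv_l
  | rewrite mul_inv_r | rewrite mul_e_l | rewrite mul_e_r]).
Ltac gsimpl_in X := repeat (first [rewrite inv_mul in X | rewrite inv_inv in X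
  | rewrite inv_e in X | rewrite <- mul_assoc in X | rewrite mul_KV in X
  | rewrite mul_VK in X | rewrite mul_inv_l in X | rewrite mul_inv_r in X
  | rewrite mul_e_l in X | rewrite mul_e_r in X]).

Context (S : list G) (HSsym : forall s, In s S -> In (inv s) S).

Definition cay (a b : G) : Prop := exists s, In s S /\ b = a ** s.

Lemma cay_sym a b : cay a b -> cay b a.
Proof. intros (s&Hs&->); exists (inv s); split; auto; gsimpl; reflexivity. Qed.

Lemma cay_path_sym (Q : G -> Prop) a b :
  clos_refl_trans G (restrict cay Q) a b -> clos_refl_trans G (restrict cay Q) b a.
Proof. apply rt_symmetric; intros x y (?&?&?); repeat split; auto using cay_sym. Qed.

Section Generated.
Context (HSgen : forall g, exists w, (forall s, In s w -> In s S) /\ word_prod mul e w = g).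

Lemma cay_word w : (forall s, In s w -> In s S) ->
  forall a, clos_refl_trans G cay a (a ** word_prod mul e w).
Proof.
  induction w as [|s w IH]; intros Hw a; simpl.
  - rewrite mul_e_r; apply rt_refl.
  - rewrite mul_assoc; apply rt_trans with (a ** s).
    + apply rt_step; exists s; auto with datatypes.
    + apply IH; auto with datatypes.
Qed.

Lemma cay_connected a b : clos_refl_trans G cay a b.
Proof.
  destruct (HSgen (inv a ** b)) as (w&Hw&Hp).
  rewrite <- (mul_VK a b), <- Hp; apply cay_word; auto.
Qed.

Fixpoint ball (k : nat) : list G :=
  match k with
  | 0 => [e]
  | Datatypes.S k => ball k ++ flat_map (fun b => map (mul b) S) (ball k)
  end.

Lemma ball_mono k m : k <= m -> incl (ball k) (ball m).
Proof. induction 1; [apply incl_refl|]; intros x Hx; simpl; apply in_or_app; auto. Qed.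

Lemma ball_e k : In e (ball k).
Proof. apply (ball_mono 0 k); [lia|]; left; auto. Qed.

Lemma ball_word w : (forall s, In s w -> In s S) ->
  forall k g, In g (ball k) -> In (g ** word_prod mul e w) (ball (k + length w)).
Proof.
  induction w as [|s w IH]; intros Hw k g Hg; simpl.
  - rewrite mul_e_r, Nat.add_0_r; auto.
  - rewrite mul_assoc, <- Nat.add_succ_comm.
    apply IH; [auto with datatypes|]. simpl; apply in_or_app; right.
    apply in_flat_map; exists g; split; auto using in_map with datatypes.
Qed.

Lemma ball_covers (A : list G) : exists r, incl A (ball r).
Proof.
  induction A as [|a A (r&Hr)]; [exists 0; intros x []|].
  destruct (HSgen a) as (w&Hw&Hp). exists (r + length w). intros x [<-|Hx].
  - apply (ball_mono (0 + length w)); [lia|].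
    rewrite <- Hp, <- (mul_e_l (word_prod mul e w)); apply ball_word; auto; left; auto.
  - apply (ball_mono r); [lia|auto].
Qed.

Definition connected_at_e (B : list G) : Prop :=
  forall b, In b B -> clos_refl_trans G (restrict cay (fun g => In g B)) e b.

Lemma ball_connected k : connected_at_e (ball k).
Proof.
  induction k as [|k IH]; intros b Hb.
  - destruct Hb as [<-|[]]; apply rt_refl.
  - assert (Hm := ball_mono k (Datatypes.S k) (Nat.le_succ_diag_r k)).
    simpl in Hb; apply in_app_or in Hb as [Hb|Hb].
    + eapply restrict_weaken; [exact Hm| auto].
    + apply in_flat_map in Hb as (c&Hc&Hb); apply in_map_iff in Hb as (s&<-&Hs).
      apply rt_trans with c; [eapply restrict_weaken; [exact Hm| auto]|].
      apply rt_step; repeat split; [apply Hm; auto| |exists s; auto].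
      simpl; apply in_or_app; right.
      apply in_flat_map; exists c; auto using in_map.
Qed.

Definition no_finite_component (B : list G) : Prop :=
  forall w, ~ In w B -> forall W : list G,
    exists y, ~ In y W /\ clos_refl_trans G (restrict cay (fun g => ~ In g B)) w y.

(* Filling a finite set: add to [B0] all the finite components of its complement.
   The result is still finite, since each such component meets the neighbourhood
   [B0 S] of [B0]; it is connected, and its complement has no finite component. *)
Section Fill.
Context (B0 : list G) (B0e : In e B0).
Local Notation outside0 := (fun g => ~ In g B0).
Local Notation reach0 := (clos_refl_trans G (restrict cay outside0)).

Definition bounded_component (x : G) : Prop :=
  exists W : list G, forall y, reach0 x y -> In y W.

Definition component_list (x : G) : list G :=
  match excluded_middle_informative (bounded_component x) with
  | left h =>
      filter (fun y => if excluded_middle_informative (reach0 x y) then true else false)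
        (proj1_sig (constructive_indefinite_description _ h))
  | right _ => []
  end.

Definition neighbours0 : list G := flat_map (fun b => map (mul b) S) B0.

Definition fill : list G := B0 ++ flat_map component_list neighbours0.

Lemma in_component_list x y :
  In y (component_list x) <-> bounded_component x /\ reach0 x y.
Proof.
  unfold component_list; destruct (excluded_middle_informative (bounded_component x)) as [h|h].
  - destruct (constructive_indefinite_description _ h) as (W&HW); simpl.
    rewrite filter_In; destruct (excluded_middle_informative (reach0 x y)); split;
      intros; intuition (try discriminate); auto.
  - simpl; tauto.
Qed.

Lemma in_fill_components y :
  In y (flat_map component_list neighbours0) <->
  exists b, In b neighbours0 /\ bounded_component b /\ reach0 b y.
Proof.
  rewrite in_flat_map; split.
  - intros (b&Hb&Hy); apply in_component_list in Hy; exists b; tauto.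
  - intros (b&Hb&Hr); exists b; rewrite in_component_list; tauto.
Qed.

Lemma B0_fill : incl B0 fill.
Proof. intros x Hx; apply in_or_app; auto. Qed.

Lemma reach_from_neighbour x : ~ In x B0 -> exists b, In b neighbours0 /\ reach0 b x.
Proof.
  intro Hx.
  destruct (path_exit cay outside0 x e (cay_connected x e) Hx (fun h => h B0e))
    as (p&q&Hxp&(s&Hs&->)&Pp&Pq).
  exists p; split; [|apply cay_path_sym; exact Hxp].
  apply NNPP in Pq; apply in_flat_map; exists (p ** s); split; auto.
  apply in_map_iff; exists (inv s); split; [gsimpl; reflexivity| auto].
Qed.

Lemma fill_connected : connected_at_e B0 -> connected_at_e fill.
Proof.
  intros B0conn b Hb; apply in_app_or in Hb as [Hb|Hb].
  { eapply restrict_weaken; [exact B0_fill| auto]. }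
  apply in_fill_components in Hb as (c&Hc&Hbd&Hcb).
  assert (Hcomp : forall y, reach0 c y -> In y fill).
  { intros y Hy; apply in_or_app; right; apply in_fill_components; eauto. }
  apply in_flat_map in Hc as (a&Ha&Hc); apply in_map_iff in Hc as (s&<-&Hs).
  apply rt_trans with a; [eapply restrict_weaken; [exact B0_fill| auto]|].
  apply rt_trans with (a ** s).
  - apply rt_step; repeat split; [apply B0_fill; auto| apply Hcomp, rt_refl| exists s; auto].
  - apply restrict_weaken with (P := reach0 (a ** s)); [exact Hcomp|].
    apply restrict_change with (P := outside0); auto.
Qed.

Lemma fill_no_finite_component : no_finite_component fill.
Proof.
  intros w Hw W.
  assert (Hw0 : ~ In w B0) by (intro; apply Hw, B0_fill; auto).
  destruct (reach_from_neighbour w Hw0) as (b&Hb&Hbw).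
  assert (Nw : ~ bounded_component w).
  { intros (W'&HW); apply Hw, in_or_app; right; apply in_fill_components.
    exists b; repeat split; auto; exists W'; intros y Hy.
    apply HW, rt_trans with b; [apply cay_path_sym|]; auto. }
  destruct (classic (exists y, reach0 w y /\ ~ In y W)) as [(y&Hy&HyW)|N].
  - exists y; split; auto; apply restrict_change with (P := outside0); auto.
    intros z Hz Hzf; apply in_app_or in Hzf as [Hzf|Hzf].
    + exact (restrict_end _ _ _ _ Hz Hw0 Hzf).
    + apply in_fill_components in Hzf as (c&Hc&Hct&Hcz).
      apply Hw, in_or_app; right; apply in_fill_components.
      exists c; repeat split; auto; apply rt_trans with z; [|apply cay_path_sym]; auto.
  - exfalso; apply Nw; exists W; intros y Hy; apply NNPP; eauto.
Qed.

End Fill.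

Definition qedge (H : G -> Prop) (g h : G) : Prop :=
  same_coset mul inv H g h \/ exists s, In s S /\ same_coset mul inv H (g ** s) h.

Definition in_image (H : G -> Prop) (K : list G) (g : G) : Prop :=
  exists b, In b K /\ same_coset mul inv H g b.


(* The finite set of elements of G whose membership in H would spoil the argument:
   with R = B B^-1, these are the elements p^-1 b (p in R) and (q b)^-1 b'
   (q in R S), for b, b' in B. Once H avoids them (except e), the quotient map
   separates the relevant translates of B. *)
Definition ratios (B : list G) : list G :=
  flat_map (fun b => map (fun b' => b' ** inv b) B) B.
Definition ratio_neighbours (B : list G) : list G :=
  flat_map (fun p => map (mul p) S) (ratios B).
Definition critical (B : list G) : list G :=
  flat_map (fun p => map (fun b => inv p ** b) B) (ratios B) ++
  flat_map (fun q => flat_map (fun b => map (fun b' => inv (q ** b) ** b') B) B)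
    (ratio_neighbours B).

Lemma in_ratios B b b' : In b B -> In b' B -> In (b' ** inv b) (ratios B).
Proof. intros; apply in_flat_map; exists b; split; auto; apply in_map_iff; exists b'; auto. Qed.

Lemma in_critical_ratio B p b : In p (ratios B) -> In b B -> In (inv p ** b) (critical B).
Proof.
  intros; apply in_or_app; left; apply in_flat_map; exists p; split; auto.
  apply in_map_iff; exists b; auto.
Qed.

Lemma in_critical_neighbour B p s b b' : In p (ratios B) -> In s S -> In b B -> In b' B ->
  In (inv (p ** s ** b) ** b') (critical B).
Proof.
  intros; apply in_or_app; right; apply in_flat_map; exists (p ** s); split.
  - apply in_flat_map; exists p; split; auto; apply in_map; auto.
  - apply in_flat_map; exists b; split; auto; apply in_map_iff; exists b'; auto.
Qed.
Section Quotient.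
Context (H : G -> Prop) (Hn : normal_subgroup mul inv e H).
Local Notation sc := (same_coset mul inv H).
Local Notation outside K := (outside_image mul inv H K).
Local Notation image K := (in_image H K).
Local Notation qpath Q := (clos_refl_trans G (restrict (qedge H) Q)).

Lemma H_e : H e. Proof. apply Hn. Qed.
Lemma H_mul x y : H x -> H y -> H (x ** y). Proof. apply Hn. Qed.
Lemma H_inv x : H x -> H (inv x). Proof. apply Hn. Qed.
Lemma H_conj x g : H x -> H (inv g ** (x ** g)). Proof. apply Hn. Qed.

Lemma sc_refl g : sc g g.
Proof. unfold same_coset; rewrite mul_inv_l; apply H_e. Qed.
Lemma sc_sym g h : sc g h -> sc h g.
Proof. unfold same_coset; intro X; apply H_inv in X; gsimpl_in X; gsimpl; exact X. Qed.
Lemma sc_trans g h k : sc g h -> sc h k -> sc g k.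
Proof.
  unfold same_coset; intros X Y; assert (Z := H_mul _ _ X Y); gsimpl_in Z; gsimpl; exact Z.
Qed.
Lemma sc_translate c a b : sc (c ** a) (c ** b) <-> sc a b.
Proof. unfold same_coset; gsimpl; tauto. Qed.
(* Right translation is well defined on G/H because H is normal. *)
Lemma sc_right x b b' : sc (x ** b) b' -> sc x (b' ** inv b).
Proof.
  unfold same_coset; intro X; assert (Z := H_conj _ (inv b) X); gsimpl_in Z; gsimpl; exact Z.
Qed.

Lemma qedge_sym g h : qedge H g h -> qedge H h g.
Proof.
  intros [X|(s&Hs&X)]; [left; apply sc_sym; auto|right; exists (inv s); split; auto].
  apply sc_right in X; apply sc_sym; auto.
Qed.

Lemma qedge_translate c a b : qedge H a b -> qedge H (c ** a) (c ** b).
Proof.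
  intros [X|(s&Hs&X)]; [left; apply sc_translate; auto|right; exists s; split; auto].
  rewrite <- mul_assoc; apply sc_translate; auto.
Qed.

Lemma qpath_sym (Q : G -> Prop) a b : qpath Q a b -> qpath Q b a.
Proof. apply rt_symmetric; intros x y (?&?&?); repeat split; auto using qedge_sym. Qed.

Lemma qpath_coset (Q : G -> Prop) a b : Q a -> Q b -> sc a b -> qpath Q a b.
Proof. intros; apply rt_step; repeat split; auto; left; auto. Qed.

Lemma qpath_translate (Q1 Q2 : G -> Prop) c a b :
  (forall g, Q1 g -> Q2 (c ** g)) -> qpath Q1 a b -> qpath Q2 (c ** a) (c ** b).
Proof.
  intros HQ X; induction X as [x y (?&?&?)| |]; eauto using rt_refl, rt_trans.
  apply rt_step; repeat split; auto using qedge_translate.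
Qed.

Lemma qpath_of_cay (Q Q' : G -> Prop) a b : (forall g, Q g -> Q' g) ->
  clos_refl_trans G (restrict cay Q) a b -> qpath Q' a b.
Proof.
  intro HQ; apply rt_mono; intros x y (Hx&Hy&(s&Hs&->)).
  repeat split; auto; right; exists s; split; auto using sc_refl.
Qed.

Lemma outside_coset K g g' : sc g g' -> outside K g -> outside K g'.
Proof. intros X Y b Hb Z; apply (Y b Hb); eapply sc_trans; eauto. Qed.

Lemma image_not_outside K g : image K g -> ~ outside K g.
Proof. intros (b&Hb&X) Y; apply (Y b Hb X). Qed.

Lemma not_outside_image K g : ~ outside K g -> image K g.
Proof. intro X; apply NNPP; intro Y; apply X; intros b Hb Z; apply Y; exists b; auto. Qed.

Lemma image_outside_disjoint K L g :
  (forall k l, In k K -> In l L -> ~ sc k l) -> image K g -> outside L g.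
Proof. intros Hd (k&Hk&X) l Hl Y; apply (Hd k l Hk Hl); eapply sc_trans; [apply sc_sym|]; eauto. Qed.

Section Criterion.
Context (B : list G) (Be : In e B)
  (image_connected : forall b, In b B -> qpath (image B) b e)
  (recentre : forall x, outside B x -> exists v, qpath (outside B) x v /\
                forall b b', In b B -> In b' B -> ~ sc (v ** b) b')
  (quotient_connected : forall a b, clos_refl_trans G (qedge H) a b)
  (reps : list G) (Hreps : forall g, exists r, In r reps /\ H (inv r ** g)).

Local Notation T t := (map (mul t) B).
Local Notation comp t := (qpath (outside (T t))).

Lemma map_mul_e : T e = B.
Proof. rewrite (map_ext (mul e) (fun x => x)); [apply map_id| apply mul_e_l]. Qed.

Lemma image_translate t g : image B g -> image (T t) (t ** g).
Proof. intros (b&Hb&X); exists (t ** b); split; [apply in_map| apply sc_translate]; auto. Qed.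

Lemma outside_translate t g : outside B g -> outside (T t) (t ** g).
Proof.
  intros X b Hb Y; apply in_map_iff in Hb as (b0&<-&Hb0).
  apply (X b0 Hb0); apply sc_translate in Y; auto.
Qed.

Lemma outside_untranslate t g : outside (T t) g -> outside B (inv t ** g).
Proof.
  intros X b Hb Y; apply (X (t ** b)); [apply in_map; auto|].
  apply (sc_translate t) in Y; rewrite mul_VK in Y; exact Y.
Qed.

Lemma translate_image_connected t b : In b B -> qpath (image (T t)) (t ** b) t.
Proof.
  intro Hb; assert (X := qpath_translate _ _ t _ _ (image_translate t) (image_connected b Hb)).
  rewrite mul_e_r in X; exact X.
Qed.

Lemma translate_recentre t x : outside (T t) x -> exists v, comp t x v /\
  forall b b', In b B -> In b' B -> ~ sc (v ** b) (t ** b').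
Proof.
  intro X; destruct (recentre _ (outside_untranslate _ _ X)) as (v0&Hr&Hd).
  exists (t ** v0); split.
  - assert (Y := qpath_translate _ _ t _ _ (outside_translate t) Hr).
    rewrite mul_VK in Y; exact Y.
  - intros b b' Hb Hb' Y; apply (Hd b b' Hb Hb').
    rewrite <- mul_assoc in Y; apply sc_translate in Y; auto.
Qed.

Lemma centre_in_image t : image (T t) t.
Proof. exists (t ** e); split; [apply in_map; auto| rewrite mul_e_r; apply sc_refl]. Qed.

Lemma image_reached t (Q : G -> Prop) g :
  (forall h, image (T t) h -> Q h) -> image (T t) g -> qpath Q t g.
Proof.
  intros HQ Hg; destruct Hg as (b1&Hb1&X); assert (Hb1' := Hb1).
  apply in_map_iff in Hb1 as (b&<-&Hb).
  apply rt_trans with (t ** b).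
  - apply qpath_sym; eapply restrict_weaken; [exact HQ| apply translate_image_connected; auto].
  - apply qpath_coset; [| |apply sc_sym; auto]; apply HQ; [exists (t ** b); auto using sc_refl|].
    exists (t ** b); auto.
Qed.

(* A vertex [z] outside pi(tB) whose whole component avoids pi(vB) is joined to t
   outside pi(vB): a path from [z] to t (which exists by (3)) first meets pi(tB)
   inside that component, and pi(tB) itself avoids pi(vB). *)
Lemma reach_centre t v z : outside (T t) z ->
  (forall w, comp t z w -> outside (T v) w) ->
  (forall g, image (T t) g -> outside (T v) g) ->
  comp v z t.
Proof.
  intros Pz Hzv Dtv.
  destruct (path_exit _ (outside (T t)) z t (quotient_connected z t) Pz
             (image_not_outside _ _ (centre_in_image t))) as (u&u'&Hzu&Huu'&Pu&Pu').
  apply not_outside_image in Pu'.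
  apply rt_trans with u; [apply restrict_change with (P := outside (T t)); auto|].
  apply rt_trans with u'; [apply rt_step; repeat split; auto; apply Hzv, Hzu|].
  apply qpath_sym, image_reached; auto.
Qed.

Lemma outside_retranslate t v g : outside (T t) g -> outside (T v) (v ** inv t ** g).
Proof.
  intros X b1 Hb1 Y; apply in_map_iff in Hb1 as (b&<-&Hb).
  apply (X (t ** b)); [apply in_map; auto|].
  apply (sc_translate (v ** inv t)); replace (v ** inv t ** (t ** b)) with (v ** b); auto.
  gsimpl; reflexivity.
Qed.

Lemma comp_retranslate t v a b : comp t a b -> comp v (v ** inv t ** a) (v ** inv t ** b).
Proof. apply qpath_translate, outside_retranslate. Qed.

Lemma comp_untranslate t v a b : comp v (v ** inv t ** a) (v ** inv t ** b) -> comp t a b.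
Proof.
  intro X; apply (comp_retranslate v t) in X.
  replace (t ** inv v ** (v ** inv t ** a)) with a in X by (gsimpl; reflexivity).
  replace (t ** inv v ** (v ** inv t ** b)) with b in X by (gsimpl; reflexivity).
  exact X.
Qed.

Lemma smaller_component t x y : outside (T t) x -> outside (T t) y -> ~ comp t x y ->
  exists v w, outside (T v) w /\ outside (T v) t /\ ~ comp v w t /\
    (forall u, comp v w u -> comp t x u) /\ comp t x v.
Proof.
  intros Px Py Nxy.
  destruct (translate_recentre t x Px) as (v&Hxv&Hd).
  assert (Dvt : forall g, image (T v) g -> outside (T t) g).
  { intro g; apply image_outside_disjoint; intros k l Hk Hl.
    apply in_map_iff in Hk as (b&<-&Hb); apply in_map_iff in Hl as (b'&<-&Hb'); auto. }
  assert (Dtv : forall g, image (T t) g -> outside (T v) g).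
  { intro g; apply image_outside_disjoint; intros k l Hk Hl X.
    apply in_map_iff in Hk as (b'&<-&Hb'); apply in_map_iff in Hl as (b&<-&Hb).
    apply (Hd b b' Hb Hb'), sc_sym, X. }
  assert (Himg : forall g, image (T v) g -> comp t x g).
  { intros g Hg; apply rt_trans with v; [exact Hxv| apply image_reached; auto]. }
  assert (Hcentre : forall z, outside (T t) z -> ~ comp t x z -> comp v z t).
  { intros z Pz Nz; apply reach_centre; auto; intros w Hw; apply NNPP; intro Y.
    apply Nz, rt_trans with w; [apply Himg, not_outside_image; auto| apply qpath_sym; auto]. }
  (* translating x, y by v t^-1 separates them in the complement of pi(vB),
     so one of them is separated from t *)
  assert (Hw : exists w, outside (T v) w /\ ~ comp v w t).
  { set (c := v ** inv t).
    destruct (classic (comp v t (c ** x))) as [X|X].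
    - exists (c ** y); split; [apply outside_retranslate; auto|]; intro Y.
      apply Nxy, (comp_untranslate t v); apply rt_trans with t; apply qpath_sym; auto.
    - exists (c ** x); split; [apply outside_retranslate; auto|]; intro Y.
      apply X, qpath_sym, Y. }
  destruct Hw as (w&Pw&Nw); exists v, w; repeat split; auto using centre_in_image.
  intros u Hu; assert (Pu : outside (T v) u) by (eapply restrict_end; eauto).
  destruct (classic (outside (T t) u)) as [Ptu|Ptu].
  - apply NNPP; intro Y; apply Nw, rt_trans with u; auto.
  - exfalso; apply Nw, rt_trans with u; [exact Hu|].
    apply qpath_sym, image_reached; auto using not_outside_image.
Qed.

(* The number of vertices of G/H in the component of [x] in the complement of pi(tB),
   counted through the coset representatives [reps]. *)
Definition component_size (t x : G) : nat := count_sat (comp t x) reps.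

Lemma component_size_lt t x v w : outside (T t) x -> outside (T v) w ->
  (forall u, comp v w u -> comp t x u) -> comp t x v ->
  component_size v w < component_size t x.
Proof.
  intros Px Pw Hsub Hxv; apply count_sat_lt; [auto|].
  destruct (Hreps v) as (r&Hr&Hvr); exists r; repeat split; auto.
  - assert (Pv : outside (T t) v) by (eapply restrict_end; eauto).
    apply rt_trans with v; [exact Hxv|].
    apply qpath_coset; [exact Pv| apply (outside_coset _ v)|]; auto using sc_sym.
  - intro X; apply (image_not_outside _ _ (centre_in_image v)).
    apply (outside_coset _ r); [exact Hvr| eapply restrict_end; eauto].
Qed.

Lemma translate_complement_connected n : forall t x y, component_size t x <= n ->
  outside (T t) x -> outside (T t) y -> comp t x y.
Proof.
  induction n as [|n IH]; intros t x y Hsize Px Py; apply NNPP; intro Nxy;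
    destruct (smaller_component t x y Px Py Nxy) as (v&w&Pw&Pt&Nwt&Hsub&Hxv);
    assert (Hlt := component_size_lt t x v w Px Pw Hsub Hxv).
  - lia.
  - apply Nwt, (IH v); [lia| auto ..].
Qed.

Lemma complement_connected g h : outside B g -> outside B h -> qpath (outside B) g h.
Proof.
  intros Pg Ph; rewrite <- map_mul_e in Pg, Ph |- *.
  exact (translate_complement_connected _ e g h (le_n _) Pg Ph).
Qed.

End Criterion.

Section Filled.
Context (B : list G) (Be : In e B)
  (Hcrit : forall g, In g (critical B) -> g <> e -> ~ H g).

Lemma quotient_connected a b : clos_refl_trans G (qedge H) a b.
Proof.
  eapply rt_mono; [|apply cay_connected].
  intros x y (s&Hs&->); right; exists s; auto using sc_refl.
Qed.

Lemma image_connected_of_connected : connected_at_e B ->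
  forall b, In b B -> qpath (image B) b e.
Proof.
  intros Hc b Hb; apply qpath_sym, (qpath_of_cay (fun g => In g B)); [|auto].
  intros g Hg; exists g; auto using sc_refl.
Qed.

Lemma ratio_outside g : In g (ratios B) -> ~ In g B -> outside B g.
Proof.
  intros Hg HgB b Hb X; apply (Hcrit (inv g ** b)); auto using in_critical_ratio.
  intro E; apply eq_of_div_e in E; subst; auto.
Qed.

Lemma disjoint_of_outside_ratios v : outside (ratios B) v ->
  forall b b', In b B -> In b' B -> ~ sc (v ** b) b'.
Proof. intros Hv b b' Hb Hb' X; apply (Hv (b' ** inv b)); auto using in_ratios, sc_right. Qed.

Lemma disjoint_of_ratio_neighbour p s : In p (ratios B) -> In s S -> ~ In (p ** s) (ratios B) ->
  forall b b', In b B -> In b' B -> ~ sc (p ** s ** b) b'.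
Proof.
  intros Hp Hs Hq b b' Hb Hb' X; apply (Hcrit _ (in_critical_neighbour B p s b b' Hp Hs Hb Hb'));
    [|exact X].
  intro E; apply eq_of_div_e in E; apply Hq.
  replace (p ** s) with (b' ** inv b) by (rewrite <- E; gsimpl; reflexivity).
  apply in_ratios; auto.
Qed.

(* Hypothesis (2) of the criterion: a vertex outside pi(B) is either already far
   from pi(B), or is the image of some element w of B B^-1 outside B; then the
   infinite component of w in the complement of B leaves the finite set B B^-1
   along an edge p -> ps, and ps is far from B. *)
Lemma recentre_of_no_finite_component : no_finite_component B ->
  forall x, outside B x -> exists v, qpath (outside B) x v /\
    forall b b', In b B -> In b' B -> ~ sc (v ** b) b'.
Proof.
  intros Hesc x Px.
  destruct (classic (outside (ratios B) x)) as [Hx|Hx].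
  { exists x; split; [apply rt_refl| apply disjoint_of_outside_ratios; auto]. }
  apply not_outside_image in Hx as (w&HwW&Hxw).
  assert (HwB : ~ In w B) by (intro X; apply (Px w X Hxw)).
  destruct (Hesc w HwB (ratios B)) as (y&HyW&Hwy).
  destruct (path_exit _ (fun g => In g (ratios B)) w y Hwy HwW HyW)
    as (p&q&Hwp&(HpB&_&(s&Hs&->))&HpW&HqW).
  assert (Hdisj := disjoint_of_ratio_neighbour p s HpW Hs HqW).
  exists (p ** s); split; [|exact Hdisj].
  assert (Pq : outside B (p ** s)).
  { intros b' Hb' X; apply (Hdisj e b'); auto; rewrite mul_e_r; exact X. }
  apply rt_trans with w; [apply qpath_coset; eauto using outside_coset|].
  apply rt_trans with p.
  - apply (qpath_of_cay (fun g => In g (ratios B) /\ ~ In g B)); [intros; apply ratio_outside; tauto|].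
    eapply rt_mono; [|exact Hwp]. intros a b (?&?&?&?&?); repeat split; auto.
  - apply rt_step; repeat split; [apply ratio_outside| |right; exists s; auto using sc_refl]; auto.
Qed.

Lemma filled_complement_connected : connected_at_e B -> no_finite_component B ->
  finite_index mul inv H -> quot_connected mul inv H S (outside B).
Proof.
  intros Hc Hesc (reps&Hreps) g h Pg Ph.
  exact (complement_connected B Be (image_connected_of_connected Hc)
           (recentre_of_no_finite_component Hesc) quotient_connected reps Hreps g h Pg Ph).
Qed.

End Filled.
End Quotient.
End Generated.
End Group.

Lemma eventually_avoids {G : Type} (e : G) (Gam : nat -> G -> Prop)
  (Hlim : forall g, (forall n, exists i, n <= i /\ Gam i g) <-> g = e) (L : list G) :
  exists N, forall n, N <= n -> forall g, In g L -> g <> e -> ~ Gam n g.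
Proof.
  induction L as [|a L (N&HN)]; [exists 0; intros n _ g []|].
  destruct (classic (a = e)) as [Ea|Ea].
  - exists N; intros n Hn g [<-|Hg] Hge; [contradiction| apply HN; auto].
  - assert (X : ~ (forall n, exists i, n <= i /\ Gam i a)) by (rewrite Hlim; exact Ea).
    apply not_all_ex_not in X as (M&HM).
    exists (N + M); intros n Hn g [<-|Hg] Hge.
    + intro Y; apply HM; exists n; split; [lia| auto].
    + apply HN; auto; lia.
Qed.

Theorem lemma5p3 (G : Type) (mul : G -> G -> G) (inv : G -> G) (e : G)
  (Hgrp : is_group mul inv e)
  (Hinf : @infinite_carrier G)
  (Gam : nat -> G -> Prop)
  (Hnorm : forall n, normal_subgroup mul inv e (Gam n))
  (Hfin : forall n, finite_index mul inv (Gam n))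
  (Hlim : forall g, (forall n, exists i, n <= i /\ Gam i g) <-> g = e)
  (S : list G) (HS : sym_gen_set mul inv e S)
  (A : list G) :
  exists B : list G, incl A B /\
    exists N, forall n, N <= n ->
      quot_connected mul inv (Gam n) S (outside_image mul inv (Gam n) B).
Proof.
  destruct HS as (_&HSsym&HSgen).
  destruct (ball_covers mul inv e Hgrp S HSgen A) as (r&Hr).
  set (B0 := ball mul e S r).
  assert (B0e : In e B0) by apply ball_e.
  set (B := fill mul S B0).
  exists B; split; [intros a Ha; apply B0_fill, Hr, Ha|].
  destruct (eventually_avoids e Gam Hlim (critical mul inv S B)) as (N&HN).
  exists N; intros n Hn.
  apply (filled_complement_connected mul inv e Hgrp S HSsym HSgen (Gam n) (Hnorm n) B).
  - apply B0_fill, B0e.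
  - apply HN, Hn.
  - apply fill_connected, ball_connected.
  - exact (fill_no_finite_component mul inv e Hgrp S HSsym HSgen B0 B0e).
  - apply Hfin.
Qed.
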